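(* Let $\mathcal{J}$ be a finite set, $\mathcal{J}_0=\mathcal{J}\cup\{0\}$, $(\Omega,P)$ a Borel probability space and $\mathcal{U}:\Omega\times\mathcal{J}_0\times\mathbb{R}\to\mathbb{R}$ satisfying the regularity and no-indifference assumptions in the context. Assume moreover: (i) for each $\varepsilon\in\Omega$ and $j\in\mathcal{J}$ the map $\delta\mapsto\mathcal{U}_{\varepsilon j}(\delta)$ is invertible; (ii) the random vector $Z_0\in\mathbb{R}^{\mathcal{J}}$ with components $Z_{0j}=\mathcal{U}_{\varepsilon j}^{-1}(\mathcal{U}_{\varepsilon 0}(0))$, $\varepsilon\sim P$, has a non-vanishing density on $\mathbb{R}^{\mathcal{J}}$. Then $\tilde\sigma^{-1}(s)$ has a single element for every $s\in\mathbb{R}^{\mathcal{J}_0}$ with $s_j>0$ for all $j$ and $\sum_j s_j=1$.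
   Context: Regularity: for every $j\in\mathcal{J}_0$ and $\delta\in\mathbb{R}$, $\varepsilon\mapsto\mathcal{U}_{\varepsilon j}(\delta)$ is measurable, and for every $\varepsilon$, $j$, $\delta\mapsto\mathcal{U}_{\varepsilon j}(\delta)$ is increasing and continuous. No indifference: for all distinct $j,j'\in\mathcal{J}_0$ and all $\delta,\delta'$, $P(\mathcal{U}_{\varepsilon j}(\delta)=\mathcal{U}_{\varepsilon j'}(\delta'))=0$. For $\delta\in\mathbb{R}^{\mathcal{J}_0}$, $\sigma_j(\delta)=P(\varepsilon:\mathcal{U}_{\varepsilon j}(\delta_j)\ge\max_{j'\in\mathcal{J}_0}\mathcal{U}_{\varepsilon j'}(\delta_{j'}))$. For $\delta\in\mathbb{R}^{\mathcal{J}}$, $\tilde\sigma(\delta)=\sigma((0,\delta))$ (normalization $\delta_0=0$), and $\tilde\sigma^{-1}(s)=\{\delta\in\mathbb{R}^{\mathcal{J}}:\tilde\sigma(\delta)=s\}$. *)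

From HB Require Import structures.
From mathcomp Require Import all_boot all_order all_algebra.
From mathcomp Require Import all_classical all_reals all_analysis.
Set Implicit Arguments. Unset Strict Implicit. Unset Printing Implicit Defensive.
Import Order.TTheory GRing.Theory Num.Theory.
Local Open Scope classical_set_scope.
Local Open Scope ring_scope.

(* Index conventions: J = 'I_n, J0 = option 'I_n, with None playing the role
   of the outside option 0. *)

(* Iterated Lebesgue integral on R^n (n-tuples), i.e. integration of a
   function g : R^n -> \bar R against n-dimensional Lebesgue measure,
   written as iterated one-dimensional Lebesgue integrals (Tonelli). *)
Fixpoint lebesgue_tuple_integral (R : realType) (n : nat) :
    (n.-tuple R -> \bar R) -> \bar R :=
  match n return (n.-tuple R -> \bar R) -> \bar R with
  | 0 => fun g => g [tuple]
  | m.+1 => fun g =>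
      (\int[@lebesgue_measure R]_(x in [set: R])
          lebesgue_tuple_integral (fun t : m.-tuple R => g (cons_tuple x t)))%E
  end.

Definition sigma (R : realType) (d : measure_display) (Omega : measurableType d)
    (P : probability Omega R) (n : nat) (U : Omega -> option 'I_n -> R -> R)
    (delta : option 'I_n -> R) (j : option 'I_n) : \bar R :=
  P [set e | forall j' : option 'I_n, U e j' (delta j') <= U e j (delta j)].

Definition extend0 (R : realType) (n : nat) (delta : 'I_n -> R) : option 'I_n -> R :=
  fun k => match k with None => 0 | Some j => delta j end.

Definition sigma_tilde (R : realType) (d : measure_display) (Omega : measurableType d)
    (P : probability Omega R) (n : nat) (U : Omega -> option 'I_n -> R -> R)
    (delta : 'I_n -> R) : option 'I_n -> \bar R :=
  sigma P U (extend0 delta).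

Definition sigma_tilde_inv (R : realType) (d : measure_display) (Omega : measurableType d)
    (P : probability Omega R) (n : nat) (U : Omega -> option 'I_n -> R -> R)
    (s : option 'I_n -> R) : set ('I_n -> R) :=
  [set delta | forall k, sigma_tilde P U delta k = (s k)%:E].

From HB Require Import structures.
From mathcomp Require Import all_boot all_order all_algebra.
From mathcomp Require Import all_classical all_reals all_analysis.
From mathcomp Require Import measurable_realfun.
Import Order.TTheory GRing.Theory Num.Theory numFieldNormedType.Exports.
Set Implicit Arguments. Unset Strict Implicit. Unset Printing Implicit Defensive.
Local Open Scope classical_set_scope.
Local Open Scope ring_scope.

(* Write x = (0, delta) and C_k(x) for the set of eps for which option k is a
   best choice, so that sigma_k(x) = P(C_k(x)).  Raising x_k enlarges C_k(x)
   and shrinks every other C_j(x); by no indifference the C_k(x) overlap only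
   on null sets, so the shares add up to 1, and by continuity of U each share
   is continuous in its own index.
   Existence: as every U_eps j is an increasing bijection of R, the set of
   delta with sigma_j <= s_j for all inside goods j is nonempty and bounded
   above in each coordinate.  Its coordinatewise supremum delta^ stays in the
   set (sigma_j is continuous from below in delta_j, nondecreasing in delta_j
   and nonincreasing in the other delta_i), and sigma_j(delta^) < s_j would
   allow delta^_j to be raised (continuity from above).  Hence
   sigma_j(delta^) = s_j, and also sigma_0(delta^) = s_0 as both sum to 1.
   Uniqueness: let sigma(delta) = sigma(delta') with delta_k < delta'_k and
   let L be the set of options l with x'_l <= x_l, which contains 0.  Whoever
   chooses in L under x' also chooses in L under x, and strictly more
   consumers choose in L under x: the event that Z0 lies in a box above delta
   whose k-th side ends at delta'_k, on which 0 is chosen under x but beaten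
   by k under x', has positive probability because the density of Z0 is
   positive.  This contradicts the equality of the shares summed over L. *)

Section measure_lemmas.
Context d (T : measurableType d) (R : realType).

Lemma measurable_ler (f g : T -> R) :
  measurable_fun setT f -> measurable_fun setT g -> measurable [set t | f t <= g t].
Proof.
move=> mf mg; rewrite -[X in measurable X]setTI.
exact: (measurable_fun_ler mf mg measurableT (Y := [set true])).
Qed.

Lemma measurable_eqr (f g : T -> R) :
  measurable_fun setT f -> measurable_fun setT g -> measurable [set t | f t = g t].
Proof.
move=> mf mg.
rewrite (_ : [set t | f t = g t] = [set t | f t <= g t] `&` [set t | g t <= f t]).
  by apply: measurableI; exact: measurable_ler.
apply/seteqP; split => t /=; first by move=> ->; rewrite lexx.
by case=> fg gf; apply/eqP; rewrite eq_le fg gf.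
Qed.

Lemma le_measure_setD (mu : {measure set T -> \bar R}) (A C : set T) :
  measurable A -> measurable C -> (mu C <= mu A + mu (C `\` A))%E.
Proof.
move=> mA mC; rewrite (measureDI mu mC mA) addeC leeD2r //.
by apply: le_measure; rewrite ?inE //; exact: measurableI.
Qed.

Lemma measureD_lt (mu : {finite_measure set T -> \bar R}) (A E : set T) :
  measurable A -> measurable E -> E `<=` A -> (0 < mu E)%E ->
  (mu (A `\` E) < mu A)%E.
Proof.
move=> mA mE EA muE_gt0.
rewrite [X in (_ < X)%E](measureDI mu mA mE) setIidr // lteDl //.
by rewrite fin_num_measure //; exact: measurableD.
Qed.

Lemma measure_bigsetU_null_overlap (mu : {measure set T -> \bar R})
    (I : eqType) (r : seq I) (Q : pred I) (F : I -> set T) :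
  uniq r -> (forall i, measurable (F i)) ->
  (forall i j, i != j -> mu (F i `&` F j) = 0%E) ->
  mu (\big[setU/set0]_(i <- r | Q i) F i) = (\sum_(i <- r | Q i) mu (F i))%E.
Proof.
move=> + mF overlap0; elim: r => [|a r IH] /=; first by rewrite !big_nil measure0.
case/andP => a_r /IH {}IH; rewrite !big_cons; case: (Q a) => //.
set B := \big[setU/set0]_(i <- r | Q i) F i.
have mB : measurable B by exact: bigsetU_measurable.
rewrite -IH (measureDI mu mB (mF a)) [X in (_ + (_ + X))%E](_ : _ = 0%E).
  have -> : F a `|` B = F a `|` (B `\` F a) by rewrite setUDr setDv setD0.
  rewrite adde0.
  by rewrite measureU //; [exact: measurableD | exact: setDIK].
apply: measure_negligible; first exact: measurableI.
rewrite /B big_seq_cond; elim/big_ind: _.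
- by rewrite set0I; exact: negligible_set0.
- by move=> X Y X0 Y0; rewrite setIUl; exact: negligibleU.
move=> i /andP[i_r _]; apply/negligibleP; first exact: measurableI.
by apply: overlap0; apply: contraNneq a_r => <-.
Qed.

Lemma measure_nonincreasing_lt (mu : {finite_measure set T -> \bar R})
    (A : (set T)^nat) :
  (forall m, measurable (A m)) -> nonincreasing_seq A ->
  mu.-negligible (\bigcap_m A m) ->
  forall eps : R, 0 < eps -> exists m, (mu (A m) < eps%:E)%E.
Proof.
move=> mA decA nullA eps eps_gt0.
have mcapA : measurable (\bigcap_m A m) by exact: bigcapT_measurable.
have cvgA : mu \o A @ \oo --> 0%E.
  rewrite -(measure_negligible mcapA nullA); apply: nonincreasing_cvg_mu => //.
  by rewrite -ge0_fin_numE // fin_num_measure.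
have [_ /cvgr_lt /(_ _ eps_gt0) [M _ HM]] := (fine_cvgP _ _).1 cvgA.
exists M; rewrite -(@fineK _ (mu (A M))) ?fin_num_measure // lte_fin.
exact: (HM M (leqnn M)).
Qed.

Lemma integral_gt0 (mu : {measure set T -> \bar R}) (f : T -> \bar R) (A : set T) :
  measurable_fun setT f -> (forall t, 0 <= f t)%E -> measurable A -> (0 < mu A)%E ->
  (forall t, A t -> 0 < f t)%E -> (0 < \int[mu]_t f t)%E.
Proof.
move=> mf f0 mA muA_gt0 fA; rewrite lt0e integral_ge0 // andbT.
apply/eqP => int0.
have /(ae_eq_integral_abs mu measurableT mf).1 [N [mN N0 fN]] :
    (\int[mu]_t `|f t| = 0)%E.
  by rewrite -int0; apply: eq_integral => t _; rewrite gee0_abs.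
suff : (mu A <= 0)%E by rewrite leNgt muA_gt0.
rewrite -N0; apply: le_measure; rewrite ?inE // => t At; apply: fN => /(_ I) ft0.
by have := fA t At; rewrite ft0 ltxx.
Qed.

End measure_lemmas.

Section lebesgue_tuple_integral.
Variable R : realType.

Lemma measurable_cons_tuple m :
  measurable_fun [set: R * m.-tuple R] (fun p => cons_tuple p.1 p.2).
Proof.
apply/measurable_fun_tnthP => i; case: (unliftP ord0 i) => [j ->|->].
- rewrite (_ : _ \o _ = (@tnth _ R ^~ j) \o snd); last first.
    by apply/funext => p /=; rewrite tnthS.
  exact: measurableT_comp (measurable_tnth j) measurable_snd.
- by rewrite (_ : _ \o _ = fst) //; apply/funext => p /=; rewrite tnth0.
Qed.

Lemma lebesgue_tuple_integral_ge0 m (g : m.-tuple R -> \bar R) :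
  (forall t, 0 <= g t)%E -> (0 <= lebesgue_tuple_integral g)%E.
Proof.
elim: m g => [|m IH] g g0 /=; first exact: g0.
by apply: integral_ge0 => x _; apply: IH.
Qed.

Lemma measurable_lebesgue_tuple_integral m d (T : measurableType d)
    (g : T * m.-tuple R -> \bar R) :
  measurable_fun setT g -> (forall p, 0 <= g p)%E ->
  measurable_fun setT (fun x => lebesgue_tuple_integral (fun t => g (x, t))).
Proof.
elim: m d T g => [|m IH] d T g mg g0 /=; first exact: measurable_fun_pair1.
pose g' (q : (T * R) * m.-tuple R) := g (q.1.1, cons_tuple q.1.2 q.2).
have mg' : measurable_fun setT g'.
  apply: measurableT_comp mg _; apply: measurable_fun_pair.
    exact: measurableT_comp measurable_fst measurable_fst.
  have := measurableT_comp (@measurable_cons_tuple m) (measurable_fun_pair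
    (measurableT_comp (@measurable_snd _ _ T R) measurable_fst) measurable_snd).
  exact.
have := measurable_fun_fubini_tonelli_F (m2 := @lebesgue_measure R) _
  (IH _ _ g' mg' (fun q => g0 _))
  (fun p => lebesgue_tuple_integral_ge0 (fun t => g0 _)).
exact.
Qed.

Lemma lebesgue_tuple_integral_gt0 m (g : m.-tuple R -> \bar R) (a b : 'I_m -> R) :
  measurable_fun setT g -> (forall t, 0 <= g t)%E -> (forall i, a i < b i) ->
  (forall t, (forall i, a i <= tnth t i < b i) -> (0 < g t)%E) ->
  (0 < lebesgue_tuple_integral g)%E.
Proof.
elim: m g a b => [|m IH] g a b mg g0 ab gpos /=; first by apply: gpos => -[].
apply: (@integral_gt0 _ _ _ (@lebesgue_measure R) _ [set` `[a ord0, b ord0[%R]).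
- apply: (measurable_lebesgue_tuple_integral
    (g := fun p : R * m.-tuple R => g (cons_tuple p.1 p.2))) => //.
  exact: measurableT_comp mg (@measurable_cons_tuple m).
- by move=> x; apply: lebesgue_tuple_integral_ge0.
- exact: measurable_itv.
- (* [rewrite lebesgue_measure_itv] fails: the interval is typed in the
     sigma-algebra of [lebesgue_measure], not in [set R]. *)
  apply: (@eq_ind_r _ _ (fun z => 0 < z)%E); last exact: lebesgue_measure_itv.
  by rewrite /= lte_fin ab lte_fin subr_gt0.
move=> y; rewrite /= in_itv /= => ay.
apply: (IH _ (a \o lift ord0) (b \o lift ord0)) => //.
- exact: measurableT_comp mg (measurable_fun_pair2 y (@measurable_cons_tuple m)).
- by move=> i; apply: ab.
move=> t t_ab; apply: gpos => i; case: (unliftP ord0 i) => [j ->|->].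
  by rewrite tnthS; apply: t_ab.
by rewrite tnth0.
Qed.

End lebesgue_tuple_integral.

Section real_lemmas.
Variable R : realType.

Lemma le_harmonicS m : harmonic m.+1 <= harmonic m :> R.
Proof. by rewrite /= lef_pV2 ?posrE // ler_nat. Qed.

Lemma continuous_shift_cvg (f : R -> R) (y : R) (u : R^nat) :
  continuous f -> u @ \oo --> 0 -> (fun m => f (y + u m)) @ \oo --> f y.
Proof.
move=> cf u0; apply: continuous_cvg; first exact: cf.
by rewrite -[X in _ --> X]addr0; apply: cvgD => //; exact: cvg_cst.
Qed.

Lemma bijective_increasing_unbounded (f : R -> R) :
  bijective f -> {homo f : x y / x < y} ->
  forall c, exists m : nat, f (- m%:R) < c < f m%:R.
Proof.
move=> [g fK gK] f_incr c; pose z1 := g (c - 1); pose z2 := g (c + 1).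
exists (Num.truncn (`|z1| + `|z2|)).+1.
have := truncnS_gt (`|z1| + `|z2|); set m := _%:R => z_lt_m.
have [z1_le z2_le] : - z1 <= `|z1| + `|z2| /\ z2 <= `|z1| + `|z2|.
  split; first by apply: le_trans (ler_norm (- z1)) _; rewrite normrN lerDl.
  by apply: le_trans (ler_norm z2) _; rewrite lerDr.
apply/andP; split.
  apply: lt_trans (_ : f z1 < c); last by rewrite /z1 gK ltrBlDr ltrDl.
  by apply: f_incr; rewrite ltrNl (le_lt_trans z1_le).
apply: lt_trans (_ : f z2 < f m); first by rewrite /z2 gK ltrDl.
by apply: f_incr; rewrite (le_lt_trans z2_le).
Qed.

End real_lemmas.

Definition shift_at (I : eqType) (R : numDomainType) (x : I -> R) (k : I) (h : R) :
  I -> R := fun j => if j == k then x j + h else x j.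

Lemma extend0_shift_at (R : realType) n (delta : 'I_n -> R) j h :
  extend0 (shift_at delta j h) = shift_at (extend0 delta) (Some j) h.
Proof. by apply/funext => -[i|]. Qed.

Section random_utility.
Variables (R : realType) (d : measure_display) (Omega : measurableType d)
  (P : probability Omega R) (n : nat) (U : Omega -> option 'I_n -> R -> R).
Hypothesis Umeas : forall j a, measurable_fun [set: Omega] (fun e => U e j a).
Hypothesis Uincr : forall e j, {homo U e j : a b / a < b}.
Hypothesis Ucont : forall e j, continuous (U e j).
Hypothesis Unoind : forall j j', j <> j' -> forall a a' : R,
  P [set e | U e j a = U e j' a'] = 0%E.

Local Notation J0 := (option 'I_n).
Implicit Types (x y : J0 -> R) (k : J0).

Definition choice_set x k : set Omega :=
  [set e | forall j, U e j (x j) <= U e k (x k)].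

Definition share x k : R := fine (sigma P U x k).

Lemma leU e j : {mono U e j : a b / a <= b}.
Proof. exact: le_mono (Uincr e j). Qed.

Lemma ltU e j : {mono U e j : a b / a < b}.
Proof. exact: leW_mono (leU e j). Qed.

Lemma measurable_choice_set x k : measurable (choice_set x k).
Proof.
rewrite (_ : choice_set x k = \big[setI/setT]_(j <- index_enum J0)
    [set e | U e j (x j) <= U e k (x k)]).
  by apply: bigsetI_measurable => j _; exact: measurable_ler.
rewrite -bigcap_seq; apply/seteqP; split => e /= Ce j; first by move=> _; exact: Ce.
by apply: Ce; rewrite /= mem_index_enum.
Qed.

Lemma sigmaE x k : sigma P U x k = (share x k)%:E.
Proof. by rewrite fineK // fin_num_measure //; exact: measurable_choice_set. Qed.

Lemma le_share x y k : choice_set x k `<=` choice_set y k -> share x k <= share y k.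
Proof.
move=> sub; rewrite -lee_fin -!sigmaE.
by apply: le_measure; rewrite ?inE //; exact: measurable_choice_set.
Qed.

Lemma sigma_le_setD x y k :
  (sigma P U y k <= sigma P U x k + P (choice_set y k `\` choice_set x k))%E.
Proof. by apply: le_measure_setD; exact: measurable_choice_set. Qed.

Lemma choice_set_sub x y k : x k <= y k -> (forall j, j != k -> y j <= x j) ->
  choice_set x k `<=` choice_set y k.
Proof.
move=> le_k le_j e Ce j; have [->|jk] := eqVneq j k; first exact: lexx.
apply: (@le_trans _ _ (U e j (x j))); first by rewrite leU le_j.
by apply: le_trans (Ce j) _; rewrite leU.
Qed.

Lemma exists_choice_set x e : exists k, choice_set x k e.
Proof.
have [k _ kmax] := @arg_maxP _ _ J0 None xpredT (fun k => U e k (x k)) isT.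
by exists k => j; exact: kmax.
Qed.

Lemma negligible_ties x k :
  P.-negligible [set e | exists2 j, j != k & U e j (x j) = U e k (x k)].
Proof.
apply: (@negligibleS _ _ _ _ (\big[setU/set0]_(j <- index_enum J0 | j != k)
    [set e | U e j (x j) = U e k (x k)])).
  by move=> e [j jk ejk]; rewrite -bigcup_seq_cond; exists j; rewrite /= ?mem_index_enum.
elim/big_ind: _ => [|A B|j jk]; first exact: negligible_set0.
  exact: negligibleU.
apply/negligibleP; first exact: measurable_eqr.
by apply: Unoind; apply/eqP.
Qed.

Lemma choice_set_overlap0 x j k : j != k ->
  P (choice_set x j `&` choice_set x k) = 0%E.
Proof.
move=> jk; apply/eqP; rewrite -measure_le0 -(Unoind (elimN eqP jk) (x j) (x k)).
apply: le_measure; rewrite ?inE; last 2 first.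
- exact: measurable_eqr.
- by move=> e [Cj Ck]; apply/eqP; rewrite eq_le Cj Ck.
by apply: measurableI; exact: measurable_choice_set.
Qed.

Definition choice_union y (L : pred J0) : set Omega :=
  \big[setU/set0]_(l <- index_enum J0 | L l) choice_set y l.

Lemma choice_unionP y L e :
  choice_union y L e <-> exists2 l, L l & choice_set y l e.
Proof.
rewrite /choice_union -bigcup_seq_cond.
split=> [[l /andP[_ Ll] Cl]|[l Ll Cl]]; exists l => //.
by rewrite /= mem_index_enum.
Qed.

Lemma measurable_choice_union y L : measurable (choice_union y L).
Proof. by apply: bigsetU_measurable => l _; exact: measurable_choice_set. Qed.

Lemma measure_choice_union y L :
  P (choice_union y L) = (\sum_(l | L l) sigma P U y l)%E.
Proof.
apply: measure_bigsetU_null_overlap; first exact: index_enum_uniq.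
  exact: measurable_choice_set.
exact: choice_set_overlap0.
Qed.

Lemma sum_share x : \sum_k share x k = 1.
Proof.
apply: EFin_inj; rewrite -sumEFin -(eq_bigr _ (fun k _ => sigmaE x k)).
rewrite -(measure_choice_union x xpredT) -(probability_setT P); congr (P _).
apply/seteqP; split => // e _; apply/choice_unionP.
by have [k Ck] := exists_choice_set x e; exists k.
Qed.

Lemma choice_union_unimproved x x' :
  choice_union x' [pred l | x' l <= x l] `<=` choice_union x [pred l | x' l <= x l].
Proof.
move=> e /choice_unionP[l /= le_l C'l]; apply/choice_unionP.
have [j Cj] := exists_choice_set x e; exists j => //=.
rewrite leNgt; apply/negP => lt_j; have := C'l j; apply/negP; rewrite -ltNge.
apply: (le_lt_trans (_ : _ <= U e l (x l))); first by rewrite leU.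
by apply: le_lt_trans (Cj l) _; rewrite ltU.
Qed.

Lemma choice_set_shiftN_lt x k (eps : R) : 0 < eps ->
  exists2 h : R, 0 < h &
    (P (choice_set x k `\` choice_set (shift_at x k (- h)) k) < eps%:E)%E.
Proof.
move=> eps_gt0.
pose A m := choice_set x k `\` choice_set (shift_at x k (- harmonic m)) k.
suff [m Am] : exists m, (P (A m) < eps%:E)%E by exists (harmonic m); rewrite ?harmonic_gt0.
apply: (measure_nonincreasing_lt (mu := P) (A := A) _ _ _ eps_gt0).
- by move=> m; apply: measurableD; exact: measurable_choice_set.
- apply/nonincreasing_seqP => m; apply/subsetPset; apply: setDS; apply: choice_set_sub.
    by rewrite /shift_at eqxx lerD2l lerN2 le_harmonicS.
  by move=> j jk; rewrite /shift_at (negbTE jk).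
apply: negligibleS (negligible_ties x k) => e Ae.
have [Ck _] := Ae 0%N I; apply: contrapT => no_tie.
have lt_k j : j != k -> U e j (x j) < U e k (x k).
  move=> jk; rewrite lt_neqAle Ck andbT.
  by apply/eqP => ejk; apply: no_tie; exists j.
have cvgU : (fun m => U e k (x k - harmonic m)) @ \oo --> U e k (x k).
  apply: (continuous_shift_cvg (u := fun m => - harmonic m)) => //.
  by rewrite -oppr0; apply: cvgN; exact: cvg_harmonic.
have : \forall m \near \oo, forall j, j != k -> U e j (x j) <= U e k (x k - harmonic m).
  apply: filter_forall => j; have [->|jk] := eqVneq j k.
    by apply: nearW => m /negP.
  by apply: filterS (cvgr_gt _ cvgU _ (lt_k j jk)) => m /ltW.
move=> [M _ /(_ M (leqnn M)) HM]; have [_] := Ae M I; apply => j.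
rewrite /shift_at eqxx; have [->|jk] := eqVneq j k; first exact: lexx.
exact: HM.
Qed.

Lemma choice_set_shift_lt x k (eps : R) : 0 < eps ->
  exists2 h : R, 0 < h &
    (P (choice_set (shift_at x k h) k `\` choice_set x k) < eps%:E)%E.
Proof.
move=> eps_gt0.
pose A m := choice_set (shift_at x k (harmonic m)) k `\` choice_set x k.
suff [m Am] : exists m, (P (A m) < eps%:E)%E by exists (harmonic m); rewrite ?harmonic_gt0.
apply: (measure_nonincreasing_lt (mu := P) (A := A) _ _ _ eps_gt0).
- by move=> m; apply: measurableD; exact: measurable_choice_set.
- apply/nonincreasing_seqP => m; apply/subsetPset; apply: setSD; apply: choice_set_sub.
    by rewrite /shift_at eqxx lerD2l le_harmonicS.
  by move=> j jk; rewrite /shift_at (negbTE jk).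
apply: negligibleS (negligible_set0 P) => e Ae.
have [_ /existsNP[j /negP]] := Ae 0%N I; rewrite -ltNge => lt_kj.
have cvgU : (fun m => U e k (x k + harmonic m)) @ \oo --> U e k (x k).
  exact: continuous_shift_cvg cvg_harmonic.
have [M _ /(_ M (leqnn M)) HM] := cvgr_lt _ cvgU _ lt_kj.
have [/(_ j) + _] := Ae M I; rewrite /shift_at eqxx.
have [jk|jk] := eqVneq j k; first by rewrite jk ltxx in lt_kj.
by rewrite leNgt HM.
Qed.

Section existence.
Hypothesis Uinv : forall e (j : 'I_n), bijective (U e (Some j)).
Variable s : J0 -> R.
Hypothesis s_gt0 : forall k, 0 < s k.
Hypothesis s_sum : \sum_k s k = 1.

Definition share_le_target : set ('I_n -> R) :=
  [set delta | forall i, share (extend0 delta) (Some i) <= s (Some i)].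

Lemma share_le_target_nonempty : exists delta, share_le_target delta.
Proof.
have small (j : 'I_n) : exists m : nat,
    (P [set e | (U e None 0 <= U e (Some j) (- m%:R))%R] < (s (Some j))%:E)%E.
  apply: (measure_nonincreasing_lt (mu := P) _ _ _ (s_gt0 _)).
  - by move=> m; exact: measurable_ler.
  - apply/nonincreasing_seqP => m; apply/subsetPset => e /= /le_trans; apply.
    by rewrite leU lerN2 ler_nat.
  apply: negligibleS (negligible_set0 P) => e /= Ae.
  have [m /andP[lt_m _]] := bijective_increasing_unbounded (Uinv e j)
    (Uincr e (Some j)) (U e None 0).
  by have := Ae m I; rewrite /= leNgt lt_m.
have [m Hm] := choice small.
exists (fun j => - (m j)%:R) => j; rewrite -lee_fin -sigmaE.
apply: le_trans (ltW (Hm j)); apply: le_measure; rewrite ?inE.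
- exact: measurable_choice_set.
- exact: measurable_ler.
by move=> e /(_ None).
Qed.

Lemma share_le_target_bounded j :
  exists b, forall delta, share_le_target delta -> delta j <= b.
Proof.
have [m Hm] : exists m : nat,
    (P [set e | (U e (Some j) m%:R <= U e None 0)%R] < (s None)%:E)%E.
  apply: (measure_nonincreasing_lt (mu := P) _ _ _ (s_gt0 _)).
  - by move=> m; exact: measurable_ler.
  - apply/nonincreasing_seqP => m; apply/subsetPset => e /=; apply: le_trans.
    by rewrite leU ler_nat.
  apply: negligibleS (negligible_set0 P) => e /= Ae.
  have [m /andP[_ lt_m]] := bijective_increasing_unbounded (Uinv e j)
    (Uincr e (Some j)) (U e None 0).
  by have := Ae m I; rewrite /= leNgt lt_m.
exists m%:R => delta delta_le; rewrite leNgt; apply/negP => lt_m.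
have : s None <= share (extend0 delta) None.
  have := sum_share (extend0 delta).
  rewrite -s_sum (bigD1 None) //= [in RHS](bigD1 None) //= => sumE.
  rewrite -(lerD2r (\sum_(k | k != None) share (extend0 delta) k)) sumE lerD2l.
  by apply: ler_sum => -[i|] // _; exact: delta_le.
apply/negP; rewrite -ltNge -lte_fin -sigmaE; apply: le_lt_trans Hm.
apply: le_measure; rewrite ?inE; first exact: measurable_choice_set.
  exact: measurable_ler.
by move=> e /(_ (Some j)) /=; apply: le_trans; rewrite leU ltW.
Qed.

Definition delta_sup (j : 'I_n) : R := sup [set delta j | delta in share_le_target].

Lemma has_sup_share_le_target j : has_sup [set delta j | delta in share_le_target].
Proof.
have [delta0 le_delta0] := share_le_target_nonempty.
have [b le_b] := share_le_target_bounded j.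
by split; [exists (delta0 j), delta0 | exists b => _ [delta le_delta <-]; exact: le_b].
Qed.

Lemma le_delta_sup delta : share_le_target delta -> forall j, delta j <= delta_sup j.
Proof.
by move=> le_delta j; apply: (sup_upper_bound (has_sup_share_le_target j)); exists delta.
Qed.

Lemma share_le_target_sup : share_le_target delta_sup.
Proof.
move=> j; apply/ler_addgt0Pr => eps eps_gt0; set xs := extend0 delta_sup.
have [h h_gt0 small] := choice_set_shiftN_lt xs (Some j) eps_gt0.
have [_ [delta le_delta <-] lt_delta] := sup_adherent h_gt0 (has_sup_share_le_target j).
have sub_delta : choice_set (shift_at xs (Some j) (- h)) (Some j) `<=`
    choice_set (extend0 delta) (Some j).
  apply: choice_set_sub; first by rewrite /shift_at eqxx; exact: ltW.
  move=> [i|] // ij; rewrite /shift_at (negbTE ij); exact: le_delta_sup.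
rewrite -lee_fin -sigmaE EFinD.
apply: le_trans (sigma_le_setD (shift_at xs (Some j) (- h)) _ _) (leeD _ (ltW small)).
by rewrite sigmaE lee_fin; apply: le_trans (le_delta j); exact: le_share.
Qed.

Lemma share_delta_sup_Some j :
  share (extend0 delta_sup) (Some j) = s (Some j).
Proof.
set xs := extend0 delta_sup.
apply/eqP; rewrite eq_le share_le_target_sup /= leNgt; apply/negP => lt_s.
have gap_gt0 : 0 < s (Some j) - share xs (Some j) by rewrite subr_gt0.
have [h h_gt0 small] := choice_set_shift_lt xs (Some j) gap_gt0.
suff /le_delta_sup/(_ j) : share_le_target (shift_at delta_sup j h).
  by rewrite /shift_at eqxx gerDl leNgt h_gt0.
move=> i; rewrite extend0_shift_at; have [->|ij] := eqVneq i j.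
  rewrite -lee_fin -sigmaE -(subrKC (share xs (Some j)) (s (Some j))) EFinD -sigmaE.
  exact: le_trans (sigma_le_setD xs _ _) (leeD (lexx _) (ltW small)).
apply: le_trans (share_le_target_sup i); apply: le_share; apply: choice_set_sub.
  by rewrite /shift_at ifN_eq //; apply: contraNneq ij => -[->].
by move=> l li; rewrite /shift_at; case: eqP => // _; rewrite lerDl ltW.
Qed.

Lemma share_delta_sup k : share (extend0 delta_sup) k = s k.
Proof.
case: k => [j|]; first exact: share_delta_sup_Some.
have eq_Some : \sum_(k | k != None) share (extend0 delta_sup) k = \sum_(k | k != None) s k.
  by apply: eq_bigr => -[j|] // _; exact: share_delta_sup_Some.
have := sum_share (extend0 delta_sup).
rewrite -s_sum (bigD1 None) //= [in RHS](bigD1 None) //= eq_Some.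
exact: addIr.
Qed.

Lemma sigma_tilde_delta_sup k : sigma_tilde P U delta_sup k = (s k)%:E.
Proof. by rewrite /sigma_tilde sigmaE share_delta_sup. Qed.

End existence.

Section uniqueness.
Variable Z0 : Omega -> n.-tuple R.
Hypothesis HZ0 : forall e j, U e (Some j) (tnth (Z0 e) j) = U e None 0.
Variable f : n.-tuple R -> R.
Hypothesis fmeas : measurable_fun [set: n.-tuple R] f.
Hypothesis fpos : forall z, 0 < f z.
Hypothesis fdens : forall A, measurable A ->
  P (Z0 @^-1` A) = lebesgue_tuple_integral (fun z => ((f z)%:E * (\1_A z)%:E)%E).

Definition outside_between (a b : 'I_n -> R) : set Omega :=
  [set e | forall i, U e (Some i) (a i) <= U e None 0 < U e (Some i) (b i)].

Lemma measurable_outside_between a b : measurable (outside_between a b).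
Proof.
rewrite (_ : outside_between a b = \big[setI/setT]_(i <- index_enum 'I_n)
    ([set e | U e (Some i) (a i) <= U e None 0] `\`
     [set e | U e (Some i) (b i) <= U e None 0])).
  apply: bigsetI_measurable => i _.
  by apply: measurableD; exact: measurable_ler.
rewrite -bigcap_seq; apply/seteqP; split => e /= Ee i.
  by move=> _; have /andP[le_a lt_b] := Ee i; split => //; apply/negP; rewrite -ltNge.
have [le_a /negP] := Ee i (mem_index_enum i).
by rewrite -ltNge le_a.
Qed.

Lemma outside_between_gt0 a b : (forall i, a i < b i) -> (0 < P (outside_between a b))%E.
Proof.
move=> ab; pose box := [set t : n.-tuple R | forall i, a i <= tnth t i < b i].
have -> : outside_between a b = Z0 @^-1` box.
  apply/seteqP; split => e /= Ee i; have /andP[le_a lt_b] := Ee i.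
    by rewrite -(leU e (Some i)) -(ltU e (Some i)) HZ0 le_a lt_b.
  by rewrite -(HZ0 e i) leU ltU le_a lt_b.
have mbox : measurable box.
  rewrite (_ : box = \big[setI/setT]_(i <- index_enum 'I_n)
      ((@tnth _ R ^~ i) @^-1` `[a i, b i[)).
    apply: bigsetI_measurable => i _; rewrite -[X in measurable X]setTI.
    by apply: measurable_tnth => //; exact: measurable_itv.
  rewrite -bigcap_seq; apply/seteqP; split => t /= tab i.
    by move=> _; rewrite /= in_itv /=; exact: tab.
  by have := tab i (mem_index_enum i); rewrite /= in_itv.
rewrite fdens //; apply: (lebesgue_tuple_integral_gt0 (a := a) (b := b)) => //.
- by apply: emeasurable_funM; apply/measurable_EFinP.
- by move=> t; apply: mule_ge0; rewrite lee_fin ?indicE ?ler0n // ltW.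
by move=> t tab; apply: mule_gt0; rewrite lte_fin // indicE mem_set.
Qed.

Lemma outside_between_choice_set a b :
  outside_between a b `<=` choice_set (extend0 a) None.
Proof. by move=> e Ee [i|] /=; [have /andP[] := Ee i | exact: lexx]. Qed.

Lemma sigma_tilde_le delta delta' :
  sigma_tilde P U delta = sigma_tilde P U delta' -> forall i, delta' i <= delta i.
Proof.
move=> eq_sigma k0; rewrite leNgt; apply/negP => lt_k0.
set x := extend0 delta; set x' := extend0 delta'.
pose L := [pred l | x' l <= x l].
pose b i := if i == k0 then delta' k0 else delta i + 1.
pose E := outside_between delta b.
have mE : measurable E by exact: measurable_outside_between.
have E_gt0 : (0 < P E)%E.
  by apply: outside_between_gt0 => i; rewrite /b; case: eqP => [->|_]; rewrite ?ltrDl.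
have E_sub : E `<=` choice_union x L.
  by move=> e /outside_between_choice_set CN; apply/choice_unionP; exists None => /=.
have sub_E : choice_union x' L `<=` choice_union x L `\` E.
  move=> e C'e; split; first exact: choice_union_unimproved.
  move: C'e => /choice_unionP[l /= le_l C'l] Ee.
  have := C'l (Some k0); apply/negP; rewrite -ltNge.
  apply: (le_lt_trans (_ : _ <= U e l (x l))); first by rewrite leU.
  apply: le_lt_trans (outside_between_choice_set Ee l) _.
  by have /andP[_] := Ee k0; rewrite /b eqxx.
have : (P (choice_union x' L) < P (choice_union x L))%E.
  apply: le_lt_trans (measureD_lt (measurable_choice_union x L) mE E_sub E_gt0).
  apply: le_measure sub_E; rewrite inE; first exact: measurable_choice_union.
  by apply: measurableD => //; exact: measurable_choice_union.
suff -> : P (choice_union x' L) = P (choice_union x L) by rewrite ltxx.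
rewrite !measure_choice_union; apply: eq_bigr => l _.
exact: (congr1 (fun g => g l) (esym eq_sigma)).
Qed.

Lemma sigma_tilde_inj : injective (sigma_tilde P U).
Proof.
move=> delta delta' eq_sigma; apply/funext => i; apply/eqP.
by rewrite eq_le sigma_tilde_le // sigma_tilde_le.
Qed.

End uniqueness.

End random_utility.

Theorem theorem4 (R : realType) (d : measure_display) (Omega : measurableType d)
  (P : probability Omega R) (n : nat) (U : Omega -> option 'I_n -> R -> R)
  (* regularity *)
  (Umeas : forall (j : option 'I_n) (delta : R),
      measurable_fun [set: Omega] (fun e => U e j delta))
  (Uincr : forall e j, {homo U e j : x y / x < y})
  (Ucont : forall e j, continuous (U e j))
  (* no indifference *)
  (Unoind : forall (j j' : option 'I_n), j <> j' -> forall delta delta' : R,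
      P [set e | U e j delta = U e j' delta'] = 0%E)
  (* (i) invertibility *)
  (Uinv : forall e (j : 'I_n), bijective (U e (Some j)))
  (* (ii) Z0_j = U_{e j}^{-1}(U_{e 0}(0)) has a non-vanishing density *)
  (Z0 : Omega -> n.-tuple R)
  (HZ0 : forall e (j : 'I_n), U e (Some j) (tnth (Z0 e) j) = U e None 0)
  (f : n.-tuple R -> R)
  (fmeas : measurable_fun [set: n.-tuple R] f)
  (fpos : forall z, 0 < f z)
  (fdens : forall A : set (n.-tuple R), measurable A ->
      P (Z0 @^-1` A) = lebesgue_tuple_integral (fun z => ((f z)%:E * (\1_A z)%:E)%E)) :
  forall s : option 'I_n -> R,
    (forall k, 0 < s k) -> \sum_(k : option 'I_n) s k = 1 ->
    exists! delta : 'I_n -> R, sigma_tilde_inv P U s delta.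
Proof.
move=> s s_gt0 s_sum; exists (delta_sup P U s); split.
  by move=> k; apply: sigma_tilde_delta_sup.
move=> delta delta_sol; apply: (sigma_tilde_inj Umeas Uincr Unoind HZ0 fmeas fpos fdens).
by apply/funext => k; rewrite delta_sol sigma_tilde_delta_sup.
Qed.
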